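(* Let $\mathcal C_Q$ be a multiplicative cyclic group of order $Q$, let $n$ be a divisor of $Q$ and $r$ a divisor of $Q/n$. For $h\in\mathcal C_Q$ define $$\mathbb I_{r,n}(h):=\frac{\phi(r)}{rn}\sum_{t\mid rn}\frac{\mu(t_{(n)})}{\phi(t_{(n)})}\sum_{\mathrm{ord}(\eta)=t}\eta(h),$$ where the inner sum runs over the characters $\eta$ of $\mathcal C_Q$ of order exactly $t$. Then $\mathbb I_{r,n}(h)=1$ if $h$ is $(r,n)$-free, and $\mathbb I_{r,n}(h)=0$ otherwise.
   Context: A character of $\mathcal C_Q$ is a group homomorphism $\eta:\mathcal C_Q\to\mathbb C^*$; its order $\mathrm{ord}(\eta)$ is the least positive integer $k$ with $\eta(h)^k=1$ for all $h\in\mathcal C_Q$. For positive integers $a,b$, $a_{(b)}:=a/\gcd(a,b)$; $\mu$ is the Möbius function and $\phi$ is Euler's totient function. Let $\mathcal C_{Q/n}$ denote the unique subgroup of $\mathcal C_Q$ of order $Q/n$. An element $h\in\mathcal C_Q$ is called $(r,n)$-free if (i) $\mathrm{ord}(h)$ divides $Q/n$, i.e. $h\in\mathcal C_{Q/n}$, and (ii) $h$ is $r$-free in $\mathcal C_{Q/n}$, i.e. whenever $h=g^s$ with $g\in\mathcal C_{Q/n}$ and $s\mid r$, then $s=1$. *)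

From HB Require Import structures.
From mathcomp Require Import all_boot all_order all_algebra all_fingroup all_solvable all_field all_character.
Set Implicit Arguments. Unset Strict Implicit. Unset Printing Implicit Defensive.
Import GRing.Theory Num.Theory.

Definition mobius (m : nat) : int :=
  if all (fun p => logn p m == 1%N) (primes m) then ((-1) ^+ size (primes m))%R else 0%R.

(* a_(b) := a / gcd(a, b) *)
Definition natpart (a b : nat) : nat := (a %/ gcdn a b)%N.

(* h is (r,n)-free in G (cyclic of order Q): h lies in the (unique) subgroup
   C_{Q/n} of order Q/n and is r-free in it. *)
Definition rn_free (gT : finGroupType) (G : {group gT}) (Q r n : nat) (h : gT) : Prop :=
  forall H : {group gT}, H \subset G -> #|H| = (Q %/ n)%N ->
    h \in H /\ (forall (g : gT) (s : nat), g \in H -> (s %| r)%N -> h = (g ^+ s)%g -> s = 1%N).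

(* I_{r,n}(h); characters of the abelian group G are its linear
   (irreducible) characters, ord(eta) = #[eta]%CF. *)
Definition Irn (gT : finGroupType) (G : {group gT}) (r n : nat) (h : gT) : algC :=
  ((totient r)%:R / (r * n)%:R *
   \sum_(t <- divisors (r * n))
      ((mobius (natpart t n))%:~R / (totient (natpart t n))%:R *
       \sum_(i : Iirr G | ('chi[G]_i \is a linear_char) && (#['chi_i]%CF == t))
          'chi_i h))%R.

From mathcomp Require Import all_boot all_order all_algebra all_fingroup all_solvable all_field all_character.
From mathcomp Require Import zify ring.
Set Implicit Arguments. Unset Strict Implicit. Unset Printing Implicit Defensive.
Import GRing.Theory Num.Theory.

(* Write G = <[x]> with #[x] = Q and h = x ^+ a.  The proof evaluates both
   sides as explicit arithmetic conditions on a: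
   - h is (r,n)-free iff n | a and a/n is coprime to r, since the subgroup of
     order Q/n is <[x ^+ n]> and r-freeness of a power y ^+ b in a cyclic
     group <[y]> amounts to coprime b r (rn_free_cycle_expg);
   - the characters of G are eta_k : x |-> eps ^+ k for a primitive Q-th root
     of unity eps, and the characters of order dividing D | Q sum to
     D [D | a] at x ^+ a (sum_irr_cforder_dvd);
   - the weights satisfy phi(r)/r * mu(t_(n))/phi(t_(n)) = sum over d | r with
     t | d n of mu(d)/d (totient_weight_natpart), proved through the
     multiplicative function mobius_multiples, checked on prime powers.
   Exchanging sums, I_{r,n}(x ^+ a) = sum_(d | r) mu(d) [d n | a], which is
   [n | a] [coprime (a/n) r] by Moebius inversion (Irn_cycle_expg). *)

Lemma mobius1 : mobius 1 = 1%R.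
Proof. by []. Qed.

Lemma mobiusM a b : 0 < a -> 0 < b -> coprime a b ->
  mobius (a * b) = (mobius a * mobius b)%R.
Proof.
move=> a_gt0 b_gt0 cop_ab.
have primesM_perm : perm_eq (primes (a * b)) (primes a ++ primes b).
  apply: uniq_perm; first exact: primes_uniq.
    by rewrite cat_uniq !primes_uniq /= andbT -coprime_has_primes.
  by move=> p; rewrite mem_cat primesM.
have lognM_a p : p \in primes a -> logn p (a * b) = logn p a.
  move=> pa; rewrite lognM // -[RHS]addn0; congr (_ + _).
  apply/eqP; rewrite eqn0Ngt logn_gt0; apply: contraL pa => pb.
  by move: cop_ab; rewrite coprime_has_primes // => /hasPn/(_ p pb).
have lognM_b p : p \in primes b -> logn p (a * b) = logn p b.
  move=> pb; rewrite lognM // -[RHS]add0n; congr (_ + _).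
  apply/eqP; rewrite eqn0Ngt logn_gt0.
  by move: cop_ab; rewrite coprime_has_primes // => /hasPn/(_ p pb).
rewrite /mobius (perm_all _ primesM_perm) all_cat (perm_size primesM_perm).
rewrite (eq_in_all (fun p pa => congr1 (eqn^~ 1) (lognM_a p pa))).
rewrite (eq_in_all (fun p pb => congr1 (eqn^~ 1) (lognM_b p pb))) size_cat.
by case: all; case: all; rewrite ?mulr0 ?mul0r // exprD.
Qed.

Lemma mobius_pX p i : prime p ->
  mobius (p ^ i) = if i == 0 then 1%R else if i == 1 then (-1)%R else 0%R.
Proof.
move=> p_pr; case: i => [|i] //=.
rewrite /mobius primesX // primes_prime //= pfactorK // andbT.
by case: i.
Qed.

Lemma dvdn_coprime_split d a b : coprime a b -> d %| a * b ->
  d = gcdn d a * gcdn d b.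
Proof.
move=> cop_ab d_ab; apply/eqP; rewrite eqn_dvd; apply/andP; split.
  rewrite muln_gcdl (muln_gcdr d) (muln_gcdr a) !dvdn_gcd d_ab.
  by rewrite !(dvdn_mulr _ (dvdnn d)) (dvdn_mull _ (dvdnn d)).
rewrite Gauss_dvd ?dvdn_gcdl //.
by apply: (coprime_dvdl (dvdn_gcdr _ _)); apply: (coprime_dvdr (dvdn_gcdr _ _)).
Qed.

Lemma sum_divisorsM (F : nat -> algC) a b : 0 < a -> 0 < b -> coprime a b ->
  (\sum_(d <- divisors (a * b)) F d =
   \sum_(d1 <- divisors a) \sum_(d2 <- divisors b) F (d1 * d2)%N)%R.
Proof.
move=> a_gt0 b_gt0 cop_ab.
rewrite -(@big_allpairs_dep _ _ _ _ (fun=> nat) _ muln (divisors a) (fun=> divisors b) F).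
apply: perm_big; apply: uniq_perm; first exact: divisors_uniq.
  apply: allpairs_uniq; try exact: divisors_uniq.
  move=> [? ?] [? ?] /allpairsP[[u1 u2] /= [hu1 hu2 [-> ->]]].
  move=> /allpairsP[[v1 v2] /= [hv1 hv2 [-> ->]]] /= e.
  move: hu1 hu2 hv1 hv2; rewrite -!dvdn_divisors // => hu1 hu2 hv1 hv2.
  have gcd_a x1 x2 : x1 %| a -> x2 %| b -> gcdn (x1 * x2) a = x1.
    move=> x1a x2b; rewrite gcdnC Gauss_gcdl ?(gcdn_idPr x1a) //.
    by rewrite coprime_sym (coprime_dvdl x2b) // coprime_sym.
  have e1 : u1 = v1 by rewrite -[LHS](gcd_a u1 u2) // e gcd_a.
  subst v1; congr (_, _); apply/eqP.
  by rewrite -(eqn_pmul2l (dvdn_gt0 a_gt0 hu1)) e.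
move=> d; apply/idP/allpairsP => [|[[x1 x2] /= [h1 h2 ->]]]; last first.
  by move: h1 h2; rewrite -!dvdn_divisors ?muln_gt0 ?a_gt0 // => /dvdn_mul; apply.
rewrite -dvdn_divisors ?muln_gt0 ?a_gt0 //= => d_ab.
exists (gcdn d a, gcdn d b); rewrite /= -!dvdn_divisors ?dvdn_gcdr //.
by split=> //; apply: dvdn_coprime_split.
Qed.

Lemma sum_divisors_pX (F : nat -> algC) p k : prime p ->
  (\sum_(d <- divisors (p ^ k)) F d = \sum_(i < k.+1) F (p ^ i)%N)%R.
Proof.
move=> p_pr; rewrite -(big_mkord xpredT (F \o expn p)) -(big_map (expn p) xpredT F).
apply: perm_big; apply: uniq_perm; first exact: divisors_uniq.
  by rewrite map_inj_uniq ?iota_uniq //; apply: expnI; apply: prime_gt1.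
move=> d; rewrite -dvdn_divisors ?expn_gt0 ?prime_gt0 //.
apply/dvdn_pfactor/mapP => // [[m mk ->]|[m]].
  by exists m => //; rewrite mem_iota.
by rewrite mem_iota add0n ltnS => mk ->; exists m.
Qed.

Lemma prime_power_split r : 1 < r -> exists p k r',
  [/\ prime p, 0 < k, 0 < r', coprime (p ^ k) r' & r = p ^ k * r'].
Proof.
move=> r_gt1; have r_gt0 := ltnW r_gt1; have p_pr := pdiv_prime r_gt1.
exists (pdiv r), (logn (pdiv r) r), r`_(pdiv r)^'; split=> //.
- by rewrite logn_gt0 mem_primes p_pr r_gt0 pdiv_dvd.
- by rewrite -p_part coprime_partC.
- by rewrite -p_part partnC.
Qed.

Lemma sum_mobius_pX (H : nat -> algC) p k : prime p -> 0 < k ->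
  (\sum_(i < k.+1) (mobius (p ^ i))%:~R * H i = H 0 - H 1)%R.
Proof.
move=> p_pr; case: k => // k _; rewrite !big_ord_recl big1 ?addr0 => [|i _].
  by rewrite !mobius_pX //= mul1r mulN1r.
by rewrite mobius_pX //= mul0r.
Qed.

Lemma sum_mobius r : 0 < r ->
  (\sum_(d <- divisors r) (mobius d)%:~R = (r == 1)%:R :> algC)%R.
Proof.
move=> r_gt0; case: (ltngtP r 1) => [|r_gt1|->]; first by case: r r_gt0.
  have [p [k [r' [p_pr k_gt0 r'_gt0 cop ->]]]] := prime_power_split r_gt1.
  have pk_gt0 : 0 < p ^ k by rewrite expn_gt0 prime_gt0.
  rewrite sum_divisorsM //.
  transitivity (\sum_(d1 <- divisors (p ^ k)) (mobius d1)%:~R *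
                  \sum_(d2 <- divisors r') (mobius d2)%:~R : algC)%R.
    apply: eq_big_seq => d1; rewrite -dvdn_divisors // => d1_pk.
    rewrite big_distrr; apply: eq_big_seq => d2; rewrite -dvdn_divisors // => d2_r'.
    rewrite mobiusM ?intrM ?(dvdn_gt0 pk_gt0 d1_pk) ?(dvdn_gt0 r'_gt0 d2_r') //.
    exact: coprime_dvdl d1_pk (coprime_dvdr d2_r' cop).
  rewrite -big_distrl /= sum_divisors_pX // (eq_bigr _ (fun i _ => esym (mulr1 _))).
  by rewrite (sum_mobius_pX (fun=> 1%R)) // subrr mul0r.
by rewrite big_seq1 mobius1.
Qed.

Lemma sum_mobius_dvd r b : 0 < r ->
  (\sum_(d <- divisors r) (mobius d)%:~R * (d %| b)%N%:R = (coprime b r)%:R :> algC)%R.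
Proof.
move=> r_gt0; have g_gt0 : 0 < gcdn r b by rewrite gcdn_gt0 r_gt0.
rewrite (eq_bigr (fun d => if (d %| b)%N then (mobius d)%:~R else 0))%R => [|d _]; last first.
  by case: (d %| b)%N; rewrite ?mulr1 ?mulr0.
rewrite -big_mkcond -big_filter (perm_big (divisors (gcdn r b))).
  by rewrite sum_mobius // /coprime gcdnC.
apply: uniq_perm; rewrite ?filter_uniq ?divisors_uniq // => d.
by rewrite mem_filter -!dvdn_divisors // dvdn_gcd andbC.
Qed.

Definition mobius_multiples (r e : nat) : algC :=
  (\sum_(d <- divisors r | (e %| d)%N) (mobius d)%:~R / d%:R)%R.

(* Its closed form phi(r)/r * mu(e)/phi(e) (see mobius_multiplesE). *)
Definition totient_weight (r e : nat) : algC :=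
  ((totient r)%:R / r%:R * ((mobius e)%:~R / (totient e)%:R))%R.

(* mobius_multiples is multiplicative: for r = a b with a, b coprime, the
   multiples of e split into multiples of gcd(e, a) and of gcd(e, b). *)
Lemma mobius_multiplesM a b e : 0 < a -> 0 < b -> coprime a b -> e %| a * b ->
  mobius_multiples (a * b) e =
  (mobius_multiples a (gcdn e a) * mobius_multiples b (gcdn e b))%R.
Proof.
move=> a_gt0 b_gt0 cop_ab e_ab.
have cop_dvd x y : x %| a -> y %| b -> coprime x y.
  by move=> xa yb; apply: coprime_dvdl xa (coprime_dvdr yb cop_ab).
have e_split := dvdn_coprime_split cop_ab e_ab.
rewrite /mobius_multiples big_mkcond sum_divisorsM // [in RHS]big_mkcond big_distrl.
apply: eq_big_seq => d1; rewrite -dvdn_divisors // => d1_a /=.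
rewrite [in RHS]big_mkcond big_distrr /=.
apply: eq_big_seq => d2; rewrite -dvdn_divisors // => d2_b.
have -> : (e %| d1 * d2) = (gcdn e a %| d1) && (gcdn e b %| d2).
  rewrite {1}e_split Gauss_dvd ?cop_dvd ?dvdn_gcdr //.
  rewrite Gauss_dvdl ?cop_dvd ?dvdn_gcdr // Gauss_dvdr // coprime_sym.
  by rewrite cop_dvd ?dvdn_gcdr.
rewrite mobiusM ?(dvdn_gt0 a_gt0 d1_a) ?(dvdn_gt0 b_gt0 d2_b) ?cop_dvd //.
rewrite intrM natrM invfM.
by case: (_ %| d1); case: (_ %| d2); rewrite /= ?mulr0 ?mul0r //; ring.
Qed.

Lemma totient_weightM a b e : 0 < a -> 0 < b -> coprime a b -> e %| a * b ->
  totient_weight (a * b) e =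
  (totient_weight a (gcdn e a) * totient_weight b (gcdn e b))%R.
Proof.
move=> a_gt0 b_gt0 cop_ab e_ab.
have e_split := dvdn_coprime_split cop_ab e_ab.
have e_gt0 : 0 < e by apply: dvdn_gt0 e_ab; rewrite muln_gt0 a_gt0.
have cop_e : coprime (gcdn e a) (gcdn e b).
  exact: coprime_dvdl (dvdn_gcdr _ _) (coprime_dvdr (dvdn_gcdr _ _) cop_ab).
have [ea_gt0 eb_gt0] : 0 < gcdn e a /\ 0 < gcdn e b by rewrite !gcdn_gt0 e_gt0.
rewrite /totient_weight totient_coprime // {1 2}e_split.
rewrite mobiusM // totient_coprime // !natrM intrM !invfM; ring.
Qed.

Lemma mobius_multiples_pX p k j : prime p -> 0 < k -> j <= k ->
  mobius_multiples (p ^ k) (p ^ j) = totient_weight (p ^ k) (p ^ j).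
Proof.
move=> p_pr k_gt0 j_le_k.
have p_gt1 := prime_gt1 p_pr; have p_gt0 := prime_gt0 p_pr.
rewrite /mobius_multiples big_mkcond sum_divisors_pX //.
rewrite (eq_bigr (fun i : 'I_k.+1 => (mobius (p ^ i))%:~R *
           ((j <= i)%:R / (p ^ i)%N%:R))%R) => [|i _]; last first.
  by rewrite dvdn_Pexp2l //; case: (j <= i); rewrite ?mul1r ?mul0r ?mulr0.
rewrite (sum_mobius_pX (fun m => (j <= m)%:R / (p ^ m)%N%:R)%R) //.
rewrite expn0 expn1 /totient_weight totient_pfactor // mobius_pX //.
have pR : (p%:R : algC)%R != 0%R by rewrite pnatr_eq0 -lt0n.
have p1R : (p%:R - 1 : algC)%R != 0%R.
  by rewrite subr_eq0 pnatr_eq1 gtn_eqF.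
case: k k_gt0 j_le_k => // k _ j_le_k.
rewrite !natrM !natrX -subn1 natrB //= exprS.
case: j j_le_k => [|[|j]] j_le_k /=.
- by rewrite expn0 /= divr1; field; rewrite pR expf_neq0.
- rewrite expn1 totient_prime // -subn1 natrB //.
  by field; rewrite pR p1R expf_neq0.
- by rewrite !mul0r subrr mulr0.
Qed.

Lemma mobius_multiplesE r e : 0 < r -> e %| r ->
  mobius_multiples r e = totient_weight r e.
Proof.
elim/ltn_ind: r e => r IH e r_gt0 e_r.
case: (ltngtP r 1) => [|r_gt1|r1]; first by case: r r_gt0 {IH e_r}.
  have [p [k [r' [p_pr k_gt0 r'_gt0 cop r_split]]]] := prime_power_split r_gt1.
  have pk_gt0 : 0 < p ^ k by rewrite expn_gt0 prime_gt0.
  have r'_lt_r : r' < r by rewrite r_split ltn_Pmull // -(expn0 p) ltn_exp2l ?prime_gt1.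
  move: e_r; rewrite r_split => e_r.
  rewrite mobius_multiplesM // totient_weightM // (IH r') ?dvdn_gcdr //.
  have [j j_le_k ->] : exists2 j, j <= k & gcdn e (p ^ k) = p ^ j.
    by apply/dvdn_pfactor => //; apply: dvdn_gcdr.
  by rewrite mobius_multiples_pX.
move: e_r; rewrite r1 dvdn1 => /eqP ->.
rewrite /mobius_multiples /totient_weight (_ : divisors 1 = [:: 1]) //.
by rewrite big_mkcond big_seq1 /= mobius1 !divr1 mulr1.
Qed.

Lemma natpart_dvd t n d : 0 < n -> (t %| d * n) = (natpart t n %| d).
Proof.
move=> n_gt0; rewrite /natpart; set g := gcdn t n.
have g_gt0 : 0 < g by rewrite gcdn_gt0 n_gt0 orbT.
have t_split : t = t %/ g * g by rewrite divnK // dvdn_gcdl.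
have n_split : n = n %/ g * g by rewrite divnK // dvdn_gcdr.
have cop : coprime (t %/ g) (n %/ g).
  by rewrite /coprime -(eqn_pmul2r g_gt0) mul1n muln_gcdl -t_split -n_split.
by rewrite {1}t_split {1}n_split mulnA dvdn_pmul2r // Gauss_dvdl.
Qed.

Lemma totient_weight_natpart r n t : 0 < r -> 0 < n -> t %| r * n ->
  totient_weight r (natpart t n) =
  (\sum_(d <- divisors r | (t %| d * n)%N) (mobius d)%:~R / d%:R)%R.
Proof.
move=> r_gt0 n_gt0 t_rn.
rewrite -mobius_multiplesE -?natpart_dvd //.
by apply: eq_bigl => d; rewrite natpart_dvd.
Qed.

Lemma sum_multiples (F : nat -> algC) c D : 0 < c ->
  (\sum_(0 <= k < c * D | (c %| k)%N) F k = \sum_(0 <= j < D) F (c * j)%N)%R.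
Proof.
move=> c_gt0; elim: D => [|D IH]; first by rewrite muln0 !big_geq.
rewrite mulnS addnC (@big_cat_nat _ _ _ (c * D)) ?leq_addr //= IH big_nat_recr //=.
congr (_ + _)%R; rewrite big_ltn_cond /=; last lia.
rewrite dvdn_mulr // big1_seq ?addr0 // => k /andP[c_k]; rewrite mem_index_iota => k_bnd.
suff : c %| k - c * D by move/dvdn_leq; lia.
by rewrite dvdn_subr ?dvdn_mulr //; lia.
Qed.

Lemma sum_prim_root_pow (z : algC) D a : (D.-primitive_root z)%R ->
  (\sum_(j < D) z ^+ (j * a) = D%:R * (D %| a)%:R)%R.
Proof.
move=> z_prim; have [D_a|D_Na] := boolP (D %| a).
  rewrite mulr1 (eq_bigr (fun=> 1%R)) => [|j _]; first by rewrite sumr_const card_ord.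
  move: D_a; rewrite (prim_order_dvd z_prim) => /eqP za1.
  by rewrite mulnC exprM za1 expr1n.
have za_neq1 : (z ^+ a != 1)%R by rewrite -(prim_order_dvd z_prim).
have za_root : ((z ^+ a) ^+ D = 1)%R by rewrite -exprM mulnC exprM (prim_expr_order z_prim) expr1n.
have geom0 : (\sum_(j < D) (z ^+ a) ^+ j = 0)%R.
  have := subrX1 (z ^+ a) D; rewrite za_root subrr => /esym/eqP.
  by rewrite mulf_eq0 subr_eq0 (negbTE za_neq1) => /eqP.
rewrite mulr0; apply: etrans geom0.
by apply: eq_bigr => j _; rewrite mulnC exprM.
Qed.

Lemma sum_prim_root_dvd (eps : algC) Q D a : (Q.-primitive_root eps)%R -> D %| Q ->
  (\sum_(k < Q | (Q %| k * D)%N) eps ^+ (k * a) = D%:R * (D %| a)%:R)%R.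
Proof.
move=> eps_prim D_Q; have Q_gt0 := prim_order_gt0 eps_prim.
have [c Q_eq] : exists c, Q = (c * D)%N by exists (Q %/ D); rewrite divnK.
have [c_gt0 D_gt0] : 0 < c /\ 0 < D by apply/andP; rewrite -muln_gt0 -Q_eq.
have c_eq : Q %/ D = c by rewrite Q_eq mulnK.
rewrite -(big_mkord (fun k => Q %| k * D) (fun k => eps ^+ (k * a))%R).
rewrite (eq_bigl (fun k => c %| k)) => [|k]; last by rewrite {1}Q_eq dvdn_pmul2r.
rewrite {1}Q_eq sum_multiples // big_mkord.
rewrite (eq_bigr (fun j : 'I_D => (eps ^+ c) ^+ (j * a))%R) => [|j _].
  by rewrite sum_prim_root_pow // -c_eq dvdn_prim_root.
by rewrite -exprM mulnA.
Qed.

Section CyclicCharacters.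

Variables (gT : finGroupType) (G : {group gT}) (x : gT).
Hypothesis G_gen : G :=: <[x]>%g.

Let x_in_G : x \in G. Proof. by rewrite G_gen cycle_id. Qed.
Let G_cyclic : cyclic G. Proof. by apply/cyclicP; exists x. Qed.

Lemma irr_cyclic_eq i j : ('chi[G]_i x = 'chi[G]_j x)%R -> i = j.
Proof.
move=> chi_x; apply: irr_inj; apply/cfun_inP => y yG.
have /cycleP[m ->] : y \in <[x]>%g by rewrite -G_gen.
by rewrite !lin_charX ?irr_cyclic_lin // chi_x.
Qed.

Lemma irr_cyclic_exponents (eps : algC) : (#[x]%g.-primitive_root eps)%R ->
  {g : Iirr G -> 'I_#[x]%g | bijective g & forall i, ('chi_i x = eps ^+ g i)%R}.
Proof.
move=> eps_prim.
have chi_root i : ('chi[G]_i x ^+ #[x]%g = 1)%R.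
  by rewrite -lin_charX ?irr_cyclic_lin // expg_order lin_char1 ?irr_cyclic_lin.
exists (fun i => sval (prim_rootP eps_prim (chi_root i))); last first.
  by move=> i; case: (prim_rootP eps_prim (chi_root i)).
apply: inj_card_bij; last by rewrite card_ord card_Iirr_cyclic // G_gen orderE.
move=> i j /= eq_ij; apply: irr_cyclic_eq.
case: (prim_rootP eps_prim (chi_root i)) eq_ij => /= k ->.
by case: (prim_rootP eps_prim (chi_root j)) => /= l -> ->.
Qed.

Lemma cforder_cyclic_dvd (eps : algC) (i : Iirr G) k D :
  (#[x]%g.-primitive_root eps)%R -> ('chi_i x = eps ^+ k)%R ->
  (#[('chi_i)%R]%CF %| D) = (#[x]%g %| k * D).
Proof.
move=> eps_prim chi_x; have chi_lin := irr_cyclic_lin i G_cyclic.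
apply/dvdn_cforderP/idP => [chiD1|x_kD y yG].
  by rewrite (prim_order_dvd eps_prim) exprM -chi_x chiD1.
have /cycleP[m ->] : y \in <[x]>%g by rewrite -G_gen.
rewrite lin_charX // chi_x -!exprM (mulnC m) mulnA exprM.
by move: x_kD; rewrite (prim_order_dvd eps_prim) => /eqP ->; rewrite expr1n.
Qed.

Lemma sum_irr_cforder_dvd D a : D %| #[x]%g ->
  (\sum_(i : Iirr G | (#[('chi_i)%R]%CF %| D)%N) 'chi_i (x ^+ a)%g
     = D%:R * (D %| a)%:R)%R.
Proof.
move=> D_x; have [eps eps_prim] := C_prim_root_exists (order_gt0 x).
have [g g_bij chi_x] := irr_cyclic_exponents eps_prim.
rewrite (eq_bigl (fun i => #[x]%g %| g i * D)) => [|i]; last first.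
  exact: cforder_cyclic_dvd (chi_x i).
rewrite (eq_bigr (fun i => eps ^+ (g i * a))%R) => [|i _]; last first.
  by rewrite lin_charX ?irr_cyclic_lin // chi_x exprM.
rewrite -(sum_prim_root_dvd a eps_prim D_x).
by rewrite (reindex g) //; apply: onW_bij.
Qed.

End CyclicCharacters.

Lemma sum_divisors_by_order (I : finType) (o : I -> nat) (F : nat -> I -> algC) m :
  0 < m ->
  (\sum_(t <- divisors m) \sum_(i | o i == t) F t i
     = \sum_(i | (o i %| m)%N) F (o i) i)%R.
Proof.
move=> m_gt0; rewrite (eq_bigr (fun t => \sum_i if o i == t then F t i else 0))%R.
  rewrite exchange_big [RHS]big_mkcond; apply: eq_bigr => i _ /=.
  rewrite -big_mkcond -big_filter (eq_filter (_ : _ =1 pred1 (o i))); last first.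
    by move=> t; rewrite /= eq_sym.
  rewrite dvdn_divisors //; case: ifP => [o_m|o_Nm].
    by rewrite filter_pred1_uniq ?divisors_uniq // big_seq1.
  by rewrite big1_seq // => t; rewrite mem_filter => /and3P[_ /eqP -> o_m]; rewrite o_Nm in o_m.
by move=> t _; rewrite big_mkcond.
Qed.

Lemma weighted_order_sum (I : finType) (o : I -> nat) (X : I -> algC) r n :
  0 < r -> 0 < n ->
  ((totient r)%:R / (r * n)%:R *
   \sum_(i | (o i %| r * n)%N)
      ((mobius (natpart (o i) n))%:~R / (totient (natpart (o i) n))%:R * X i)
   = n%:R^-1 * \sum_(d <- divisors r)
                 (mobius d)%:~R / d%:R * \sum_(i | (o i %| d * n)%N) X i)%R.
Proof.
move=> r_gt0 n_gt0.
have weight i : o i %| r * n -> ((totient r)%:R / (r * n)%:R *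
    ((mobius (natpart (o i) n))%:~R / (totient (natpart (o i) n))%:R)
    = n%:R^-1 * \sum_(d <- divisors r | (o i %| d * n)%N) (mobius d)%:~R / d%:R :> algC)%R.
  move=> o_rn; rewrite -totient_weight_natpart // /totient_weight natrM invfM.
  by ring.
rewrite big_distrr /=.
transitivity (n%:R^-1 * \sum_i \sum_(d <- divisors r | (o i %| d * n)%N)
                 (mobius d)%:~R / d%:R * X i)%R.
  rewrite big_distrr [LHS]big_mkcond /=; apply: eq_bigr => i _.
  case: ifP => [o_rn|o_Nrn].
    by rewrite mulrA weight // -mulrA big_distrl.
  rewrite big1_seq ?mulr0 // => d /andP[o_dn]; rewrite -dvdn_divisors // => d_r.
  by move: o_Nrn; rewrite (dvdn_trans o_dn) // dvdn_mul.
congr (_ * _)%R; rewrite (eq_bigr _ (fun i _ => big_mkcond _ _)) exchange_big /=.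
by apply: eq_bigr => d _; rewrite big_distrr [RHS]big_mkcond.
Qed.

Lemma dvdn_eq_mod d Q a b : d %| Q -> a = b %[mod Q] -> (d %| a) = (d %| b).
Proof. by move=> d_Q eq_ab; rewrite /dvdn -(modn_dvdm a d_Q) eq_ab modn_dvdm. Qed.

Lemma mem_cycle_expg (gT : finGroupType) (x : gT) n a : n %| #[x]%g ->
  ((x ^+ a)%g \in <[x ^+ n]>%g) = (n %| a).
Proof.
move=> n_x; apply/cycleP/idP => [[j]|n_a]; last first.
  by exists (a %/ n); rewrite -expgM mulnC divnK.
rewrite -expgM => /eqP; rewrite eq_expg_mod_order => /eqP eq_a.
by rewrite (dvdn_eq_mod n_x eq_a) dvdn_mulr.
Qed.

Lemma r_free_cycle_expg (gT : finGroupType) (y : gT) b r : r %| #[y]%g ->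
  (forall g s, g \in <[y]>%g -> s %| r -> (y ^+ b)%g = (g ^+ s)%g -> s = 1)
  <-> coprime b r.
Proof.
move=> r_y; split=> [r_free|cop_br g s /cycleP[j ->] s_r].
  have gcd_b := dvdn_gcdl b r.
  apply/eqP; apply: (r_free (y ^+ (b %/ gcdn b r))%g) (dvdn_gcdr b r) _.
    exact: mem_cycle.
  by rewrite -expgM divnK.
rewrite -expgM => /eqP; rewrite eq_expg_mod_order => /eqP eq_b.
have s_b : s %| b by rewrite (dvdn_eq_mod (dvdn_trans s_r r_y) eq_b) dvdn_mull.
by apply/eqP; rewrite -dvdn1 -(eqP cop_br) dvdn_gcd s_b.
Qed.

Lemma rn_free_cycle_expg (gT : finGroupType) (G : {group gT}) x r n a :
  G :=: <[x]>%g -> n %| #[x]%g -> r %| #[x]%g %/ n ->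
  rn_free G #[x]%g r n (x ^+ a)%g <-> (n %| a) && coprime (a %/ n) r.
Proof.
move=> G_gen n_x r_xn.
have G_cyclic : cyclic G by apply/cyclicP; exists x.
have xn_G : <[x ^+ n]>%g \subset G by rewrite G_gen cycle_subG mem_cycle.
have order_xn : #[x ^+ n]%g = #[x]%g %/ n by rewrite orderXdiv.
have card_xn : #|<[x ^+ n]>%G| = #[x]%g %/ n by rewrite -orderE.
have sub_eq (H : {group gT}) : H \subset G -> #|H| = #[x]%g %/ n -> H :=: <[x ^+ n]>%g.
  move=> H_G H_card; apply/eqP.
  by rewrite (eq_subG_cyclic G_cyclic H_G xn_G) H_card card_xn.
split=> [rn_fr | /andP[n_a cop]].
  have [xa_in xa_free] := rn_fr _ xn_G card_xn.
  rewrite mem_cycle_expg // in xa_in; rewrite xa_in /=.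
  rewrite -(r_free_cycle_expg (a %/ n) (y := x ^+ n)) ?order_xn //.
  by move=> g s; rewrite -expgM mulnC divnK //; apply: xa_free.
move=> H H_G H_card; rewrite (sub_eq H H_G H_card) mem_cycle_expg //; split=> //.
move: cop; rewrite -(r_free_cycle_expg (a %/ n) (y := x ^+ n)) ?order_xn //.
by rewrite -expgM mulnC divnK.
Qed.

Lemma Irn_cforder_sums (gT : finGroupType) (G : {group gT}) r n h :
  cyclic G -> 0 < r -> 0 < n ->
  Irn G r n h = (n%:R^-1 * \sum_(d <- divisors r) (mobius d)%:~R / d%:R *
                   \sum_(i : Iirr G | (#[('chi_i)%R]%CF %| d * n)%N) 'chi_i h)%R.
Proof.
move=> G_cyclic r_gt0 n_gt0.
rewrite /Irn -(weighted_order_sum (fun i => #[('chi[G]_i)%R]%CF)) //; congr (_ * _)%R.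
rewrite -(sum_divisors_by_order _ (fun t i => (mobius (natpart t n))%:~R /
                                  (totient (natpart t n))%:R * 'chi[G]_i h)%R).
  2: by rewrite muln_gt0 r_gt0.
apply: eq_bigr => t _.
rewrite big_distrr /=; apply: eq_big => [i|i /andP[_ /eqP <-] //].
by rewrite irr_cyclic_lin.
Qed.

Lemma Irn_cycle_expg (gT : finGroupType) (G : {group gT}) x r n a :
  G :=: <[x]>%g -> n %| #[x]%g -> r %| #[x]%g %/ n ->
  Irn G r n (x ^+ a)%g = ((n %| a) && coprime (a %/ n) r)%N%:R%R.
Proof.
move=> G_gen n_x r_xn.
have x_gt0 := order_gt0 x; have n_gt0 := dvdn_gt0 x_gt0 n_x.
have r_gt0 : 0 < r by apply: dvdn_gt0 r_xn; rewrite divn_gt0 // dvdn_leq.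
have G_cyclic : cyclic G by apply/cyclicP; exists x.
rewrite Irn_cforder_sums // big_distrr /=.
transitivity (\sum_(d <- divisors r) (mobius d)%:~R * (d * n %| a)%:R : algC)%R.
  apply: eq_big_seq => d; rewrite -dvdn_divisors // => d_r.
  have dn_x : d * n %| #[x]%g by rewrite -(divnK n_x) dvdn_mul // (dvdn_trans d_r).
  have dR : (d%:R : algC)%R != 0%R by rewrite pnatr_eq0 -lt0n (dvdn_gt0 r_gt0 d_r).
  have nR : (n%:R : algC)%R != 0%R by rewrite pnatr_eq0 -lt0n.
  by rewrite sum_irr_cforder_dvd // natrM; field; rewrite dR nR.
have [n_a|n_Na] /= := boolP (n %| a).
  rewrite -(sum_mobius_dvd (a %/ n) r_gt0); apply: eq_bigr => d _.
  by rewrite -{1}(divnK n_a) dvdn_pmul2r.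
rewrite big1_seq // => d _; case: (boolP (d * n %| a)) => [dn_a|_]; last by rewrite mulr0.
by case/negP: n_Na; apply: dvdn_trans dn_a; apply: dvdn_mull.
Qed.

Unset Implicit Arguments. Set Strict Implicit.

Theorem proposition3p6 (gT : finGroupType) (G : {group gT}) (Q n r : nat) (h : gT) :
  cyclic G -> #|G| = Q -> (n %| Q)%N -> (r %| Q %/ n)%N -> h \in G ->
  (rn_free G Q r n h -> Irn G r n h = 1%R) /\
  (~ rn_free G Q r n h -> Irn G r n h = 0%R).
Proof.
move=> /cyclicP[x G_gen] G_card n_Q r_Qn h_G.
have order_x : #[x]%g = Q by rewrite orderE -G_gen.
have [a ->] : exists a, h = (x ^+ a)%g by apply/cycleP; rewrite -G_gen.
rewrite -order_x in n_Q r_Qn *.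
rewrite (Irn_cycle_expg a G_gen n_Q r_Qn).
have := rn_free_cycle_expg a G_gen n_Q r_Qn.
case: (_ && _) => free_iff; split=> //.
- by case; apply/free_iff.
- by move/free_iff.
Qed.
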